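(* For every real $\theta\geq 0$, $K_0(A(\mathbb{R}^2_\theta))=K_0(\mathbb{C})\cong\mathbb{Z}$.
   Context: $A(\mathbb{R}^2_\theta)$ is the unital $*$-algebra generated by two self-adjoint elements $x,y$ with $[x,y]=xy-yx=-i\theta$, elements being finite sums $\sum a_{p,q}x^py^q$ with linearly independent ordered monomials. A projector over a $*$-algebra $A$ is a square matrix $p$ over $A$ with $p^2=p=p^*$; projectors $p,q$ are equivalent if $\mathrm{diag}(p,0)=u\,\mathrm{diag}(q,0)\,u^*$ for some unitary matrix $u$ over $A$ of suitable size; $K_0(A)$ is the Grothendieck group of the semigroup of equivalence classes under $p+q:=\mathrm{diag}(p,q)$. *)

From HB Require Import structures.
From mathcomp Require Import all_boot all_order all_algebra.
From mathcomp Require Import complex.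
From mathcomp Require Import reals.
Set Implicit Arguments. Unset Strict Implicit. Unset Printing Implicit Defensive.
Import Order.TTheory GRing.Theory Num.Theory.
Local Open Scope ring_scope.

Section Moyal.
Variable R : realType.
Variable theta : R.

Definition CC := R[i].

(** Carrier of A(R^2_theta): an element sum_{p,q} a_{p,q} x^p y^q (ordered
    monomials, x to the left of y) is stored as the bivariate polynomial
    sum_q (sum_p a_{p,q} X^p) Y^q.  ONLY the additive structure (and the zero)
    of {poly {poly CC}} is used; the product of A(R^2_theta) is [wmul] below,
    NOT the commutative polynomial product. *)
Definition Atheta := {poly {poly CC}}.

Definition acoef (a : Atheta) (p q : nat) : CC := (a`_q)`_p.

Definition amono (c : CC) (p q : nat) : Atheta := (c *: 'X^p)%:P * 'X^q.

(** i*theta, so that y x = x y + i theta  (i.e. [x,y] = -i theta) *)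
Definition itheta : CC := Complex 0 theta.

(** (x^p y^q)(x^r y^s) = sum_k k! C(q,k) C(r,k) (i theta)^k x^(p+r-k) y^(q+s-k),
    the normal ordering of y^q x^r using y x = x y + i theta. *)
Definition monoprod (p q r s : nat) : Atheta :=
  \sum_(k < (minn q r).+1)
     amono ((k`! * 'C(q, k) * 'C(r, k))%:R * itheta ^+ k) (p + r - k) (q + s - k).

Definition wmul (a b : Atheta) : Atheta :=
  \sum_(q < size a) \sum_(p < size a`_q) \sum_(s < size b) \sum_(r < size b`_s)
     (acoef a p q * acoef b r s)%:P%:P * monoprod p q r s.

Definition wstar (a : Atheta) : Atheta :=
  \sum_(q < size a) \sum_(p < size a`_q)
     wmul (amono (conjc (acoef a p q)) 0 q) (amono 1 p 0).

Definition mmul m n k (A : 'M[Atheta]_(m, n)) (B : 'M[Atheta]_(n, k))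
  : 'M[Atheta]_(m, k) :=
  \matrix_(i, j) \sum_(l < n) wmul (A i l) (B l j).

Definition mstar m n (A : 'M[Atheta]_(m, n)) : 'M[Atheta]_(n, m) :=
  \matrix_(i, j) wstar (A j i).

Definition mid n : 'M[Atheta]_n := \matrix_(i, j) (if i == j then amono 1 0 0 else 0).

Definition projector n (P : 'M[Atheta]_n) : Prop :=
  mmul P P = P /\ mstar P = P.

Definition unitary n (U : 'M[Atheta]_n) : Prop :=
  mmul U (mstar U) = mid n /\ mmul (mstar U) U = mid n.

Definition pad N m (P : 'M[Atheta]_m) : 'M[Atheta]_N :=
  \matrix_(i, j)
    match (insub (val i) : option 'I_m), (insub (val j) : option 'I_m) with
    | Some i', Some j' => P i' j'
    | _, _ => 0
    end.

Definition sqmx := {m : nat & 'M[Atheta]_m}.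

Definition is_proj (P : sqmx) : Prop := projector (projT2 P).

Definition proj_equiv (P Q : sqmx) : Prop :=
  exists N (U : 'M[Atheta]_N),
    (projT1 P <= N)%N /\ (projT1 Q <= N)%N /\ unitary U /\
    pad N (projT2 P) = mmul (mmul U (pad N (projT2 Q))) (mstar U).

Definition dsum (P Q : sqmx) : sqmx :=
  existT _ (projT1 P + projT1 Q)%N (block_mx (projT2 P) 0 0 (projT2 Q)).

(** Grothendieck group: the pair (P, Q) stands for [P] - [Q];
    (P1,Q1) and (P2,Q2) define the same element of K_0 iff
    [P1] + [Q2] + [R] = [P2] + [Q1] + [R] in the semigroup of classes
    for some projector R. *)
Definition K0_eq (PQ1 PQ2 : sqmx * sqmx) : Prop :=
  exists Rp : sqmx, is_proj Rp /\
    proj_equiv (dsum (dsum PQ1.1 PQ2.2) Rp) (dsum (dsum PQ2.1 PQ1.2) Rp).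

(** the class n [1] in K_0, n an integer, 1 the 1x1 unit projector:
    image of n under Z = K_0(C) -> K_0(A(R^2_theta)) induced by C -> A. *)
Definition sq_id (n : nat) : sqmx := existT _ n (mid n).
Definition sq_empty : sqmx := existT _ 0%N (0 : 'M[Atheta]_0).

Definition int_class (z : int) : sqmx * sqmx :=
  match z with
  | Posz n => (sq_id n, sq_empty)
  | Negz n => (sq_empty, sq_id n.+1)
  end.

End Moyal.

(** Write elements of A(R^2_theta) in normal order, sum a_pq x^p y^q.  Moving
    y^q past x^r only creates terms of lower total degree, so if c x^p y^q is
    the top monomial of a (highest total degree D, then highest x-degree), the
    coefficient of x^2p y^2q in a^* a is |c|^2, and every other monomial of
    a^* a has lower degree or lower x-degree.  In a sum \sum_l a_l^* a_l these top coefficients cannot cancel.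
    The diagonal entries of P^* P = P and U^* U = 1 are such sums, of degree
    at most that of the entries, so projectors and unitaries over
    A(R^2_theta) have scalar entries and K_0 is computed with complex
    matrices.  There a projection P is V^* V for V with orthonormal rows and
    rank P rows, two projections of the same rank become unitarily conjugate
    once padded with zeros (W = V1^* V2 is a partial isometry and the rotation
    [[W, 1 - W W^*], [1 - W^* W, W^*]] is unitary), and the trace, equal to
    the rank, is a unitary invariant.  So [P] - [Q] is rank P - rank Q. *)

From mathcomp Require Import all_boot all_order all_algebra.
From mathcomp Require Import complex reals.
From mathcomp Require Import zify.
Import Order.TTheory GRing.Theory Num.Theory.
Local Open Scope ring_scope.
Set Implicit Arguments. Unset Strict Implicit. Unset Printing Implicit Defensive.

Lemma mulf_neq0_factors (F : idomainType) (x y : F) : x * y != 0 -> x != 0 /\ y != 0.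
Proof. by rewrite mulf_eq0 negb_or => /andP. Qed.

Lemma sum_widen (V : nmodType) n N (F : nat -> V) : (n <= N)%N ->
  (forall i, (n <= i < N)%N -> F i = 0) -> \sum_(i < n) F i = \sum_(i < N) F i.
Proof.
move=> nN F0; rewrite (big_ord_widen _ _ nN) [RHS](bigID (fun i : 'I_N => (i < n)%N)) /=.
by rewrite [X in _ = _ + X]big1 ?addr0 // => i; rewrite -leqNgt => ni; apply: F0; rewrite ni /=.
Qed.

Lemma sum_neq0 (V : nmodType) (I : finType) (F : I -> V) :
  \sum_i F i != 0 -> exists i, F i != 0.
Proof.
move=> sF; apply/existsP; apply: contraNT sF => /existsPn F0.
by apply/eqP/big1 => i _; apply/eqP; move: (F0 i); rewrite negbK.
Qed.

Lemma sum_single (V : nmodType) N (i0 : 'I_N) (F : 'I_N -> V) :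
  (forall i, F i != 0 -> i = i0 :> nat) -> \sum_i F i = F i0.
Proof.
move=> F0; rewrite (bigD1 i0) //= big1 ?addr0 // => i ni0; apply/eqP.
by apply: contraNT ni0 => /F0 /val_inj ->.
Qed.

Lemma sum2_single (V : nmodType) N (i0 j0 : 'I_N) (F : 'I_N -> 'I_N -> V) :
  (forall i j, F i j != 0 -> i = i0 :> nat /\ j = j0 :> nat) ->
  \sum_i \sum_j F i j = F i0 j0.
Proof.
move=> F0; rewrite (sum_single (i0 := i0)) => [|i /sum_neq0[j /F0[]//]].
by apply: sum_single => j /F0[].
Qed.

Lemma sum4_single (V : nmodType) N (i0 j0 k0 l0 : 'I_N) (F : 'I_N -> 'I_N -> 'I_N -> 'I_N -> V) :
  (forall i j k l, F i j k l != 0 ->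
     [/\ i = i0 :> nat, j = j0 :> nat, k = k0 :> nat & l = l0 :> nat]) ->
  \sum_i \sum_j \sum_k \sum_l F i j k l = F i0 j0 k0 l0.
Proof.
move=> F0; rewrite (sum2_single (i0 := i0) (j0 := j0)).
  by apply: sum2_single => k l /F0[].
by move=> i j /sum_neq0[k /sum_neq0[l /F0[]]].
Qed.

Section Padding.
Variable V : nmodType.

Definition padmx M N m n (A : 'M[V]_(m, n)) : 'M[V]_(M, N) :=
  \matrix_(i, j)
    match (insub (val i) : option 'I_m), (insub (val j) : option 'I_n) with
    | Some i', Some j' => A i' j'
    | _, _ => 0
    end.

Lemma padmx_id m n (A : 'M[V]_(m, n)) : padmx m n A = A.
Proof. by apply/matrixP => i j; rewrite mxE !valK. Qed.

Lemma trmx_padmx M N m n (A : 'M[V]_(m, n)) : (padmx M N A)^T = padmx N M A^T.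
Proof.
apply/matrixP => i j; rewrite !mxE.
by case: (insub (val i) : option 'I_n) => [?|]; case: (insub (val j) : option 'I_m) => [?|];
  rewrite ?mxE.
Qed.

Lemma sum_padmx N n (F : 'I_n -> V) : (n <= N)%N ->
  \sum_(l < N) (if (insub (val l) : option 'I_n) is Some l' then F l' else 0) = \sum_l F l.
Proof.
move=> nN; pose G l := if (insub l : option 'I_n) is Some l' then F l' else 0.
rewrite -(sum_widen (F := G) nN) => [|l /andP[nl _]]; last by rewrite /G insubF // ltnNge nl.
by apply: eq_bigr => l _; rewrite /G valK.
Qed.

Lemma mxtrace_padmx N n (A : 'M[V]_n) : (n <= N)%N -> \tr (padmx N N A) = \tr A.
Proof.
move=> nN; rewrite /mxtrace -(sum_padmx (fun l => A l l) nN).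
by apply: eq_bigr => l _; rewrite mxE; case: (insub (val l) : option 'I_n).
Qed.

Lemma padmx_block N N' K K' m n (A : 'M[V]_(m, n)) : (m <= N)%N -> (n <= K)%N ->
  padmx (N + N') (K + K') A = block_mx (padmx N K A) 0 0 0.
Proof.
move=> mN nK; apply/matrixP => i j.
case: (split_ordP i) => i' ->; case: (split_ordP j) => j' ->;
rewrite ?block_mxEul ?block_mxEur ?block_mxEdl ?block_mxEdr !mxE //=.
- by case: (insub (val i') : option 'I_m) => [?|] //; rewrite insubF //; apply/negbTE; lia.
- by rewrite insubF //; apply/negbTE; lia.
- by rewrite insubF //; apply/negbTE; lia.
Qed.

End Padding.

Lemma map_padmx (V W : nmodType) (f : V -> W) M N m n (A : 'M[V]_(m, n)) :
  f 0 = 0 -> map_mx f (padmx M N A) = padmx M N (map_mx f A).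
Proof.
move=> f0; apply/matrixP => i j; rewrite !mxE.
by case: (insub (val i) : option 'I_m) => [?|]; case: (insub (val j) : option 'I_n) => [?|];
  rewrite ?mxE.
Qed.

Lemma padmx_mul (S : pzSemiRingType) M L K m n k (A : 'M[S]_(m, n)) (B : 'M[S]_(n, k)) :
  (n <= L)%N -> padmx M L A *m padmx L K B = padmx M K (A *m B).
Proof.
move=> nL; apply/matrixP => i j; rewrite !mxE.
under eq_bigr => l _ do rewrite !mxE.
case: (insub (val i) : option 'I_m) => [i'|] /=; last by apply: big1 => l _; rewrite mul0r.
case: (insub (val j) : option 'I_k) => [j'|] /=; last first.
  by apply: big1 => l _; case: (insub (val l) : option 'I_n) => [?|] /=; rewrite ?mulr0 ?mul0r.
rewrite mxE -(sum_padmx (fun l => A i' l * B l j') nL).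
by apply: eq_bigr => l _; case: (insub (val l) : option 'I_n); rewrite ?mul0r.
Qed.

(** * Projections in complex matrix algebras *)

Section HermitianProjections.
Context {C : numClosedFieldType}.
Local Open Scope sesquilinear_scope.

Lemma trmxC_mul m n p (A : 'M[C]_(m, n)) (B : 'M[C]_(n, p)) :
  (A *m B)^t* = B^t* *m A^t*.
Proof. by rewrite trmx_mul map_mxM. Qed.

Lemma trmxCB m n (A B : 'M[C]_(m, n)) : (A - B)^t* = A^t* - B^t*.
Proof. by rewrite linearB map_mxB. Qed.

Lemma trmxC1 n : (1%:M : 'M[C]_n)^t* = 1%:M.
Proof. by rewrite trmx1 map_mx1. Qed.

Lemma trmxC_padmx M N m n (A : 'M[C]_(m, n)) : (padmx M N A)^t* = padmx N M (A^t*).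
Proof. by rewrite trmx_padmx map_padmx ?conjC0. Qed.

Definition hproj n (P : 'M[C]_n) := P *m P = P /\ P^t* = P.

Lemma hproj_block m n (P : 'M[C]_m) (Q : 'M[C]_n) :
  hproj P -> hproj Q -> hproj (block_mx P 0 0 Q).
Proof.
move=> [PP Ps] [QQ Qs]; split.
  by rewrite mulmx_block !mulmx0 !mul0mx !addr0 add0r PP QQ.
by rewrite tr_block_mx map_block_mx !linear0 !map_mx0 Ps Qs.
Qed.

Lemma hproj1 n : hproj (1%:M : 'M[C]_n).
Proof. by split; rewrite ?mulmx1 ?trmxC1. Qed.

Lemma hproj_eqmx_unitary r n (P : 'M[C]_n) (V : 'M[C]_(r, n)) :
  hproj P -> V \is unitarymx -> (V :=: P)%MS -> V^t* *m V = P.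
Proof.
case=> PP Ps Vu eqVP.
have /submxP[D ePV] : (P <= V)%MS by rewrite eqVP.
have /submxP[G eVP] : (V <= P)%MS by rewrite eqVP.
have VP : V *m P = V by rewrite eVP -mulmxA PP.
have : (P *m (V^t* *m V))^t* = P^t* by rewrite {1}ePV mulmxA mulmxtVK // -ePV.
by rewrite !trmxC_mul trmxCK Ps => <-; rewrite -mulmxA VP.
Qed.

Lemma hproj_factor n (P : 'M[C]_n) : hproj P ->
  exists2 V : 'M[C]_(\rank P, n), V \is unitarymx & V^t* *m V = P.
Proof.
move=> hP; have Vu : schmidt (row_base P) \is unitarymx.
  by apply: schmidt_unitarymx; rewrite rank_leq_col.
exists (schmidt (row_base P)) => //; apply: hproj_eqmx_unitary => //.
exact: eqmx_trans (eqmx_schmidt_free (row_base_free P)) (eq_row_base P).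
Qed.

Lemma mxtrace_hproj n (P : 'M[C]_n) : hproj P -> \tr P = (\rank P)%:R.
Proof. by case/hproj_factor => V /unitarymxP VV {1}<-; rewrite mxtrace_mulC VV mxtrace1. Qed.

Lemma partial_isometry_unitary_conj N (W X Y : 'M[C]_N) :
  W *m W^t* = X -> W^t* *m W = Y -> X *m W = W ->
  exists2 U : 'M[C]_(N + N), U \is unitarymx &
    block_mx X 0 0 0 = U *m block_mx Y 0 0 0 *m U^t*.
Proof.
move=> WWs WsW XW.
have WY : W *m Y = W by rewrite -WsW mulmxA WWs XW.
have XX : X *m X = X by rewrite -{2}WWs mulmxA XW.
have YY : Y *m Y = Y by rewrite -{1}WsW -mulmxA WY.
have Xs : X^t* = X by rewrite -WWs trmxC_mul trmxCK.
have Ys : Y^t* = Y by rewrite -WsW trmxC_mul trmxCK.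
have WsX : W^t* *m X = W^t* by rewrite -Xs -trmxC_mul XW.
have YWs : Y *m W^t* = W^t* by rewrite -Ys -trmxC_mul WY.
have idemC Z : Z *m Z = Z -> (1%:M - Z) *m (1%:M - Z) = 1%:M - Z :> 'M[C]_N.
  by move=> ZZ; rewrite mulmxBl mul1mx mulmxBr mulmx1 ZZ subrr subr0.
have Us : (block_mx W (1%:M - X) (1%:M - Y) (W^t*))^t* = block_mx (W^t*) (1%:M - Y) (1%:M - X) W.
  by rewrite tr_block_mx map_block_mx !trmxCB !trmxC1 Xs Ys trmxCK.
exists (block_mx W (1%:M - X) (1%:M - Y) (W^t*)).
  apply/unitarymxP; rewrite Us mulmx_block (scalar_mx_block N N 1) WWs WsW idemC // idemC //.
  rewrite !mulmxBl !mulmxBr !mul1mx !mulmx1 WY XW WsX YWs !subrr !addr0.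
  by rewrite addrC !subrK.
rewrite Us !mulmx_block !(mulmx0, mul0mx, addr0) WY mulmxBl mul1mx YY subrr.
by rewrite !(mul0mx, addr0) WWs mulmxBr mulmx1 WY subrr.
Qed.

Lemma unitarymx_padmx r m N (V : 'M[C]_(r, m)) :
  V \is unitarymx -> (m <= N)%N -> padmx r N V \is unitarymx.
Proof.
move=> /unitarymxP VV mN; apply/unitarymxP.
by rewrite trmxC_padmx padmx_mul // VV padmx_id.
Qed.

Lemma hproj_unitary_conj a b N (X : 'M[C]_a) (Y : 'M[C]_b) :
  hproj X -> hproj Y -> \rank X = \rank Y -> (a <= N)%N -> (b <= N)%N ->
  exists2 U : 'M[C]_(N + N), U \is unitarymx &
    padmx (N + N) (N + N) X = U *m padmx (N + N) (N + N) Y *m U^t*.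
Proof.
move=> hX hY rXY aN bN.
have [V Vu VX] := hproj_factor hX; have [W Wu WY] := hproj_factor hY.
move: V Vu VX; rewrite rXY => V Vu VX.
set V1 := padmx (\rank Y) N V; set W1 := padmx (\rank Y) N W.
have V1u : V1 \is unitarymx by apply: unitarymx_padmx.
have W1u : W1 \is unitarymx by apply: unitarymx_padmx.
have V1V1 : V1^t* *m V1 = padmx N N X by rewrite trmxC_padmx padmx_mul // VX.
have W1W1 : W1^t* *m W1 = padmx N N Y by rewrite trmxC_padmx padmx_mul // WY.
have [|||U Uu eXY] := @partial_isometry_unitary_conj N (V1^t* *m W1) (padmx N N X) (padmx N N Y).
- by rewrite trmxC_mul trmxCK mulmxA mulmxtVK.
- by rewrite trmxC_mul trmxCK mulmxA mulmxtVK.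
- by rewrite -V1V1 mulmxA mulmxtVK.
by exists U; rewrite // !padmx_block.
Qed.

Lemma mxtrace_unitary_conj n (U A : 'M[C]_n) :
  U \is unitarymx -> \tr (U *m A *m U^t*) = \tr A.
Proof.
by move=> /unitarymxP/mulmx1C UsU; rewrite mxtrace_mulC mulmxA UsU mul1mx.
Qed.

Lemma unitary_conj_hproj_rank a b N (X : 'M[C]_a) (Y : 'M[C]_b) (U : 'M[C]_N) :
  hproj X -> hproj Y -> (a <= N)%N -> (b <= N)%N -> U \is unitarymx ->
  padmx N N X = U *m padmx N N Y *m U^t* -> \rank X = \rank Y.
Proof.
move=> hX hY aN bN Uu eXY; apply/eqP; rewrite -(eqr_nat C).
by rewrite -!mxtrace_hproj // -(mxtrace_padmx X aN) eXY mxtrace_unitary_conj ?mxtrace_padmx.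
Qed.

End HermitianProjections.

(** * Normal-ordered coefficients *)

Section Coefficients.
Variable R : realType.
Local Notation C := R[i].
Local Notation A := (Atheta R).
Implicit Types (a b : A) (c d : C).

Definition aconst c : A := c%:P%:P.

Lemma acoef_sum (I : Type) (r : seq I) (P : pred I) (F : I -> A) p q :
  acoef (\sum_(i <- r | P i) F i) p q = \sum_(i <- r | P i) acoef (F i) p q.
Proof. by rewrite /acoef !coef_sum. Qed.

Lemma acoefCM c a p q : acoef (aconst c * a) p q = c * acoef a p q.
Proof. by rewrite /acoef !coefCM. Qed.

Lemma acoef_amono c p q u v :
  acoef (amono c p q) u v = if (u == p) && (v == q) then c else 0.
Proof.
rewrite /acoef /amono coefCM coefXn.
case: (v == q); rewrite ?andbF ?andbT ?mulr0 ?coef0 // mulr1 coefZ coefXn.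
by case: (u == p); rewrite ?mulr1 ?mulr0.
Qed.

Lemma acoef_amono_diag c p q : acoef (amono c p q) p q = c.
Proof. by rewrite acoef_amono !eqxx. Qed.

Lemma amono00 c : amono c 0 0 = aconst c.
Proof. by rewrite /amono /aconst !expr0 mulr1 alg_polyC. Qed.

Lemma acoef_aconst c u v :
  acoef (aconst c) u v = if (u == 0) && (v == 0) then c else 0.
Proof. by rewrite -amono00 acoef_amono. Qed.

Lemma acoefP a b : (forall p q, acoef a p q = acoef b p q) -> a = b.
Proof. by move=> eab; apply/polyP => q; apply/polyP => p; apply: eab. Qed.

Lemma aconst0 : aconst 0 = 0.
Proof. by rewrite /aconst !polyC0. Qed.

Lemma aconstD c d : aconst (c + d) = aconst c + aconst d.
Proof. by rewrite /aconst !polyCD. Qed.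

Lemma aconst_sum (I : Type) (r : seq I) (P : pred I) (F : I -> C) :
  aconst (\sum_(i <- r | P i) F i) = \sum_(i <- r | P i) aconst (F i).
Proof. exact: (big_morph _ aconstD aconst0). Qed.

Lemma aconst_inj : injective aconst.
Proof. by move=> c d /polyC_inj /polyC_inj. Qed.

Lemma aconst_acoef a : (forall p q, (p + q != 0)%N -> acoef a p q = 0) ->
  a = aconst (acoef a 0 0).
Proof.
move=> a0; apply: acoefP => p q; rewrite acoef_aconst.
by case: p q => [|p] [|q]; rewrite //= a0.
Qed.

Definition abounded a N := (size a <= N)%N /\ forall q, (size (a`_q)%R <= N)%N.

Definition abound a := (size a + \max_(q < size a) size (a`_q)%R)%N.

Lemma abounded_abound a : abounded a (abound a).
Proof.
split=> [|q]; first exact: leq_addr.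
case: (ltnP q (size a)) => qa; last by rewrite nth_default // size_poly0.
apply: leq_trans (leq_addl _ _).
exact: (leq_bigmax_cond (F := fun q : 'I_(size a) => size a`_q) (Ordinal qa)).
Qed.

Lemma abounded_le a N M : abounded a N -> (N <= M)%N -> abounded a M.
Proof. by case=> aN aqN NM; split=> [|q]; apply: leq_trans NM. Qed.

Lemma abounded_acoef a N p q : abounded a N -> acoef a p q != 0 ->
  (p < N)%N /\ (q < N)%N.
Proof.
case=> aN aqN; rewrite /acoef => apq; split; rewrite ltnNge; apply: contra apq => le.
  by rewrite nth_default //; apply: leq_trans le.
by rewrite (nth_default _ (leq_trans aN le)) coef0.
Qed.

Lemma sum_acoef_widen (V : nmodType) a N (F : nat -> nat -> V) : abounded a N ->
  (forall p q, acoef a p q = 0 -> F p q = 0) ->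
  \sum_(q < size a) \sum_(p < size a`_q) F p q = \sum_(q < N) \sum_(p < N) F p q.
Proof.
case=> aN aqN F0.
transitivity (\sum_(q < size a) \sum_(p < N) F p q).
  apply: eq_bigr => q _; apply: (sum_widen (F := F^~ q)) => // p /andP[qp _].
  by apply: F0; rewrite /acoef nth_default.
apply: (sum_widen (F := fun q => \sum_(p < N) F p q)) => // q /andP[aq _].
apply: big1 => p _.
by apply: F0; rewrite /acoef (nth_default _ aq) coef0.
Qed.

Lemma abounded_amono c p q : abounded (amono c p q) (p + q).+1.
Proof.
rewrite /amono mul_polyC; split=> [|q'].
  by apply: leq_trans (size_scale_leq _ _) _; rewrite size_polyXn; lia.
rewrite coefZ coefXn; case: (q' == q); rewrite ?mulr0 ?size_poly0 // mulr1.
by apply: leq_trans (size_scale_leq _ _) _; rewrite size_polyXn; lia.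
Qed.

End Coefficients.

Section Products.
Variable R : realType.
Variable theta : R.
Local Notation C := R[i].
Local Notation A := (Atheta R).
Implicit Types (a b : A) (c d : C).

Lemma acoef_amono_nz c p q u v : acoef (amono c p q) u v != 0 -> u = p /\ v = q.
Proof.
by rewrite acoef_amono; case: (u =P p) => [->|_]; case: (v =P q) => [->|_]; rewrite ?eqxx.
Qed.

Lemma aconstM_nz c a : aconst c * a != 0 -> c != 0.
Proof. by apply: contraNN => /eqP ->; rewrite aconst0 mul0r. Qed.

Lemma wmul_abounded a b N : abounded a N -> abounded b N ->
  wmul theta a b = \sum_(q < N) \sum_(p < N) \sum_(s < N) \sum_(r < N)
     aconst (acoef a p q * acoef b r s) * monoprod theta p q r s.
Proof.
move=> aN bN; rewrite /wmul (sum_acoef_widen (F := fun p q => \sum_(s < size b)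
  \sum_(r < size b`_s) aconst (acoef a p q * acoef b r s) * monoprod theta p q r s) aN) //.
  apply: eq_bigr => q _; apply: eq_bigr => p _.
  apply: (sum_acoef_widen (F := fun r s => aconst (acoef a p q * acoef b r s) * _) bN) => r s ->.
  by rewrite mulr0 aconst0 mul0r.
by move=> p q ->; apply: big1 => s _; apply: big1 => r _; rewrite mul0r aconst0 mul0r.
Qed.

Lemma wmul_amono c d p q r s :
  wmul theta (amono c p q) (amono d r s) = aconst (c * d) * monoprod theta p q r s.
Proof.
set N := (p + q + r + s).+1.
have [pN qN rN sN] : [/\ p < N, q < N, r < N & s < N]%N by split; rewrite /N; lia.
rewrite (wmul_abounded (N := N)); try by apply: abounded_le (abounded_amono _ _ _) _; lia.
rewrite (sum4_single (i0 := Ordinal qN) (j0 := Ordinal pN) (k0 := Ordinal sN) (l0 := Ordinal rN)).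
  by rewrite /= !acoef_amono !eqxx.
move=> i j k l /aconstM_nz; rewrite mulf_eq0 negb_or.
by case/andP=> /acoef_amono_nz[-> ->] /acoef_amono_nz[-> ->]; split.
Qed.

Lemma wstar_abounded a N : abounded a N -> wstar theta a =
  \sum_(q < N) \sum_(p < N) aconst (acoef a p q)^* * monoprod theta 0 q p 0.
Proof.
move=> aN; rewrite /wstar (sum_acoef_widen
  (F := fun p q => wmul theta (amono (acoef a p q)^* 0 q) (amono 1 p 0)) aN) //.
  by apply: eq_bigr => q _; apply: eq_bigr => p _; rewrite wmul_amono mulr1.
by move=> p q ->; rewrite wmul_amono conjC0 mul0r aconst0 mul0r.
Qed.

Lemma monoprod0 : monoprod theta 0 0 0 0 = 1.
Proof.
by rewrite /monoprod big_ord1 amono00 fact0 bin0 !muln1 mulr1n expr0 mulr1 /aconst !polyC1.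
Qed.

Lemma wmul_aconst c d : wmul theta (aconst c) (aconst d) = aconst (c * d).
Proof. by rewrite -!amono00 wmul_amono monoprod0 mulr1 amono00. Qed.

Lemma wstar_aconst c : wstar theta (aconst c) = aconst c^*.
Proof.
have c1 : abounded (aconst c) 1 by rewrite -amono00; apply: abounded_amono.
by rewrite (wstar_abounded c1) !big_ord1 acoef_aconst !eqxx monoprod0 mulr1.
Qed.

Lemma acoef_monoprod_nz p q r s u v : acoef (monoprod theta p q r s) u v != 0 ->
  exists2 k, (k <= minn q r)%N & u = (p + r - k)%N /\ v = (q + s - k)%N.
Proof.
rewrite /monoprod acoef_sum => /sum_neq0[k /acoef_amono_nz[-> ->]].
by exists k; rewrite // -ltnS ltn_ord.
Qed.

Lemma acoef_monoprod_top p q r s :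
  acoef (monoprod theta p q r s) (p + r) (q + s) = 1.
Proof.
rewrite /monoprod acoef_sum (sum_single (i0 := ord0)) => [|k].
  by rewrite !subn0 acoef_amono_diag fact0 !bin0 !muln1 mulr1n expr0 mulr1.
by move/acoef_amono_nz=> [e _] /=; have := ltn_ord k; lia.
Qed.

Lemma acoef_wmul a b N u v : abounded a N -> abounded b N ->
  acoef (wmul theta a b) u v = \sum_(q < N) \sum_(p < N) \sum_(s < N) \sum_(r < N)
    acoef a p q * acoef b r s * acoef (monoprod theta p q r s) u v.
Proof.
move=> aN bN; rewrite (wmul_abounded aN bN) !acoef_sum; apply: eq_bigr => q _.
rewrite acoef_sum; apply: eq_bigr => p _; rewrite acoef_sum; apply: eq_bigr => s _.
by rewrite acoef_sum; apply: eq_bigr => r _; rewrite acoefCM.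
Qed.

Lemma acoef_wstar a N u v : abounded a N -> acoef (wstar theta a) u v =
  \sum_(q < N) \sum_(p < N) (acoef a p q)^* * acoef (monoprod theta 0 q p 0) u v.
Proof.
move=> aN; rewrite (wstar_abounded aN) acoef_sum; apply: eq_bigr => q _.
by rewrite acoef_sum; apply: eq_bigr => p _; rewrite acoefCM.
Qed.

End Products.

Section LeadingTerms.
Variable R : realType.
Variable theta : R.
Local Notation C := R[i].
Local Notation A := (Atheta R).
Implicit Types (a b f g : A).

Lemma abounded_gt a b D : exists N, [/\ abounded a N, abounded b N & (D < N)%N].
Proof.
exists (maxn (maxn (abound a) (abound b)) D.+1); split; last by lia.
  by apply: abounded_le (abounded_abound a) _; lia.
by apply: abounded_le (abounded_abound b) _; lia.
Qed.

Definition lead_below a D p0 := forall p q, acoef a p q != 0 ->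
  (p + q <= D)%N /\ ((p + q)%N = D -> (p <= p0)%N).

Lemma acoef_wstar_nz a N u v : abounded a N -> acoef (wstar theta a) u v != 0 ->
  exists p q k, [/\ acoef a p q != 0, (k <= minn q p)%N, u = (p - k)%N & v = (q - k)%N].
Proof.
move=> aN; rewrite (acoef_wstar _ _ _ aN) => /sum_neq0[q /sum_neq0[p /mulf_neq0_factors[]]].
rewrite conjC_eq0 => apq /acoef_monoprod_nz[k kqp [-> ->]].
by exists p, q, k; rewrite add0n addn0.
Qed.

Lemma acoef_wstar_above a D p0 u v : lead_below a D p0 -> (D < u + v)%N ->
  acoef (wstar theta a) u v = 0.
Proof.
move=> lead Duv; have [N [aN _ _]] := abounded_gt a a 0.
apply/eqP; apply: contraTT Duv => /(acoef_wstar_nz aN)[p [q [k [/lead[pqD _] _ -> ->]]]].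
by lia.
Qed.

Lemma acoef_wstar_top a D p0 u v : lead_below a D p0 -> (u + v)%N = D ->
  acoef (wstar theta a) u v = (acoef a u v)^*.
Proof.
move=> lead uvD; have [N [aN _ DN]] := abounded_gt a a D.
have [uN vN] : (u < N)%N /\ (v < N)%N by split; lia.
rewrite (acoef_wstar _ _ _ aN) (sum2_single (i0 := Ordinal vN) (j0 := Ordinal uN)).
  by have := acoef_monoprod_top theta 0 v u 0; rewrite add0n addn0 /= => ->; rewrite mulr1.
move=> q p /mulf_neq0_factors[]; rewrite conjC_eq0 => /lead[pqD _].
by move=> /acoef_monoprod_nz[k kqp [eu ev]] /=; split; lia.
Qed.

Lemma lead_below_wstar a D p0 : lead_below a D p0 -> lead_below (wstar theta a) D p0.
Proof.
move=> lead p q nz; case: (ltnP D (p + q)) => [Dpq|pqD].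
  by move: nz; rewrite (acoef_wstar_above lead Dpq) eqxx.
by split=> // e; move: nz; rewrite (acoef_wstar_top lead e) conjC_eq0 => /lead[_]; apply.
Qed.

Lemma acoef_wmul_lead g f D p0 : lead_below g D p0 -> lead_below f D p0 -> (p0 <= D)%N ->
  acoef (wmul theta g f) (p0 + p0) (D - p0 + (D - p0)) =
  acoef g p0 (D - p0) * acoef f p0 (D - p0).
Proof.
move=> gD fD p0D; have [N [gN fN DN]] := abounded_gt g f D.
have [p0N qN] : (p0 < N)%N /\ (D - p0 < N)%N by split; lia.
rewrite (acoef_wmul _ _ _ gN fN).
rewrite (sum4_single (i0 := Ordinal qN) (j0 := Ordinal p0N) (k0 := Ordinal qN) (l0 := Ordinal p0N)).
  by rewrite /= acoef_monoprod_top mulr1.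
move=> q p s r /mulf_neq0_factors[/mulf_neq0_factors[/gD[pqD pp0] /fD[rsD rp0]]].
by move=> /acoef_monoprod_nz[k kqr [eu ev]] /=; split; lia.
Qed.

Lemma exists_lead n (f : 'I_n -> A) l1 p1 q1 :
  acoef (f l1) p1 q1 != 0 -> (0 < p1 + q1)%N ->
  exists D p0 l0, [/\ (0 < D)%N, (p0 <= D)%N, forall l, lead_below (f l) D p0
                    & acoef (f l0) p0 (D - p0) != 0].
Proof.
move=> nz1 pq1; pose B := \max_l abound (f l).
have fB l p q : acoef (f l) p q != 0 -> (p < B)%N /\ (q < B)%N.
  apply: abounded_acoef; apply: abounded_le (abounded_abound _) _.
  exact: (leq_bigmax (F := fun l => abound (f l))).
pose deg d := [exists l, [exists p : 'I_d.+1, acoef (f l) p (d - p) != 0]].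
have degP l p q : acoef (f l) p q != 0 -> deg (p + q)%N.
  move=> nz; apply/existsP; exists l; apply/existsP.
  have pS : (p < (p + q).+1)%N by lia.
  by exists (Ordinal pS); rewrite /= addKn.
have degB d : deg d -> (d <= B + B)%N.
  by case/existsP => l /existsP[p /fB[]]; have := ltn_ord p; lia.
case: (ex_maxnP (ex_intro deg _ (degP _ _ _ nz1)) degB) => D /existsP[l2 /existsP[p2 nz2]] maxD.
have fD l p q : acoef (f l) p q != 0 -> (p + q <= D)%N by move=> /degP /maxD.
pose top p := [exists l, acoef (f l) p (D - p) != 0] && (p <= D)%N.
have topD p : top p -> (p <= D)%N by case/andP.
have top2 : top p2 by apply/andP; split; [apply/existsP; exists l2 | rewrite -ltnS ltn_ord].
case: (ex_maxnP (ex_intro top _ top2) topD) => p0 /andP[/existsP[l0 nz0] p0D] maxp0.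
exists D, p0, l0; split => //; first by have := fD _ _ _ nz1; lia.
move=> l p q nz; split; first exact: fD nz.
move=> pqD; apply: maxp0; apply/andP; split; last by lia.
by apply/existsP; exists l; have -> : (D - p = q)%N by lia.
Qed.

Lemma wnorm_sum_const n (f : 'I_n -> A) g :
  \sum_l wmul theta (wstar theta (f l)) (f l) = g ->
  (forall D, (0 < D)%N -> (forall l p q, acoef (f l) p q != 0 -> (p + q <= D)%N) ->
     forall p q, (D < p + q)%N -> acoef g p q = 0) ->
  forall l, f l = aconst (acoef (f l) 0 0).
Proof.
move=> fg g0 l1; apply: aconst_acoef => p1 q1; rewrite -lt0n => pq1.
apply/eqP; apply: contraT => nz1.
have [D [p0 [l0 [D0 p0D lead nz0]]]] := exists_lead nz1 pq1.
have term l : acoef (wmul theta (wstar theta (f l)) (f l)) (p0 + p0) (D - p0 + (D - p0)) =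
    (acoef (f l) p0 (D - p0))^* * acoef (f l) p0 (D - p0).
  rewrite (acoef_wmul_lead (lead_below_wstar (lead l)) (lead l) p0D).
  by rewrite (acoef_wstar_top (lead l)) //; lia.
(* g has no monomial of degree 2 D > D, but there its coefficient is \sum |c_l|^2. *)
have := g0 D D0 (fun l p q nz => (lead l p q nz).1) (p0 + p0)%N (D - p0 + (D - p0))%N.
rewrite -fg acoef_sum; under eq_bigr do rewrite term.
move=> /(_ ltac:(lia)) /psumr_eq0P sum0.
have /eqP := sum0 (fun l _ => ltac:(by rewrite mulrC mul_conjC_ge0)) l0 isT.
by rewrite mulf_eq0 conjC_eq0 orbb (negbTE nz0).
Qed.

End LeadingTerms.

(** * Projectors and unitaries over A(R^2_theta) *)

Section ScalarMatrices.
Variable R : realType.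
Variable theta : R.
Local Notation C := R[i].
Local Notation A := (Atheta R).
Local Open Scope sesquilinear_scope.

Definition cmx m n (X : 'M[C]_(m, n)) : 'M[A]_(m, n) := map_mx (@aconst R) X.

Lemma mmul_cmx m n p (X : 'M[C]_(m, n)) (Y : 'M[C]_(n, p)) :
  mmul theta (cmx X) (cmx Y) = cmx (X *m Y).
Proof.
apply/matrixP => i j; rewrite !mxE aconst_sum; apply: eq_bigr => l _.
by rewrite !mxE wmul_aconst.
Qed.

Lemma mstar_cmx m n (X : 'M[C]_(m, n)) : mstar theta (cmx X) = cmx (X^t*).
Proof. by apply/matrixP => i j; rewrite !mxE wstar_aconst. Qed.

Lemma mid_cmx n : mid R n = cmx 1%:M.
Proof. by apply/matrixP => i j; rewrite !mxE; case: eqP => _; rewrite ?amono00 ?aconst0. Qed.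

Lemma cmx_inj m n : injective (@cmx m n).
Proof.
move=> X Y /matrixP eXY; apply/matrixP => i j.
by have := eXY i j; rewrite !mxE => /aconst_inj.
Qed.

(* [pad N] is [padmx N N] at type [Atheta R]. *)
Lemma pad_cmx N m (X : 'M[C]_m) : pad N (cmx X) = cmx (padmx N N X).
Proof. exact/esym/map_padmx/aconst0. Qed.

Lemma cmx_acoef m n (M : 'M[A]_(m, n)) :
  (forall i j, M i j = aconst (acoef (M i j) 0 0)) ->
  M = cmx (\matrix_(i, j) acoef (M i j) 0 0).
Proof. by move=> Mc; apply/matrixP => i j; rewrite !mxE -Mc. Qed.

Lemma projector_cmx m (P : 'M[A]_m) : projector theta P ->
  exists2 X, P = cmx X & hproj X.
Proof.
case=> PP Ps; have Pc i j : P i j = aconst (acoef (P i j) 0 0).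
  apply: (wnorm_sum_const (f := fun l => P l j) (g := P j j)) => [|D _ Pdeg p q Dpq].
    have : mmul theta (mstar theta P) P j j = P j j by rewrite Ps PP.
    by rewrite mxE => <-; apply: eq_bigr => l _; rewrite mxE.
  by apply/eqP; apply: contraTT Dpq => /Pdeg; lia.
have eP := cmx_acoef Pc; set X := \matrix_(i, j) _ in eP.
by exists X => //; split; apply: cmx_inj; rewrite -?mmul_cmx -?mstar_cmx -eP.
Qed.

Lemma unitary_cmx m (U : 'M[A]_m) : unitary theta U ->
  exists2 U0, U = cmx U0 & U0 \is unitarymx.
Proof.
case=> UUs UsU; have Uc i j : U i j = aconst (acoef (U i j) 0 0).
  apply: (wnorm_sum_const (f := fun l => U l j) (g := amono 1 0 0)) => [|D _ _ p q Dpq].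
    have : mmul theta (mstar theta U) U j j = amono 1 0 0 by rewrite UsU mxE eqxx.
    by rewrite mxE => <-; apply: eq_bigr => l _; rewrite mxE.
  by rewrite acoef_amono; case: ifP => // /andP[/eqP p0 /eqP q0]; exfalso; lia.
have eU := cmx_acoef Uc; set U0 := \matrix_(i, j) _ in eU.
exists U0 => //; apply/unitarymxP/cmx_inj.
by rewrite -mid_cmx -mmul_cmx -mstar_cmx -eU.
Qed.

Definition sqcmx k (X : 'M[C]_k) : sqmx R := existT _ k (cmx X).

Lemma is_proj_sqcmx k (X : 'M[C]_k) : hproj X -> is_proj theta (sqcmx X).
Proof. by case=> XX Xs; split; rewrite /= ?mmul_cmx ?mstar_cmx ?XX ?Xs. Qed.

Lemma dsum_sqcmx a b (X : 'M[C]_a) (Y : 'M[C]_b) :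
  dsum (sqcmx X) (sqcmx Y) = sqcmx (block_mx X 0 0 Y).
Proof.
have cmx0 m n : map_mx (@aconst R) (0 : 'M[C]_(m, n)) = 0.
  by apply/matrixP => i j; rewrite !mxE aconst0.
by rewrite /dsum /sqcmx /= /cmx map_block_mx !cmx0.
Qed.

Lemma proj_equiv_sqcmx a b (X : 'M[C]_a) (Y : 'M[C]_b) : hproj X -> hproj Y ->
  proj_equiv theta (sqcmx X) (sqcmx Y) <-> \rank X = \rank Y.
Proof.
move=> hX hY; split.
  case=> N [U [aN [bN [/unitary_cmx[U0 -> U0u] eXY]]]].
  apply: (unitary_conj_hproj_rank hX hY aN bN U0u); apply: cmx_inj.
  by move: eXY; rewrite /= !pad_cmx mstar_cmx !mmul_cmx.
move=> rXY; have [||U Uu eXY] := hproj_unitary_conj (N := (a + b)%N) hX hY rXY; try lia.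
exists (a + b + (a + b))%N, (cmx U).
split; [by rewrite /=; lia | split; [by rewrite /=; lia | split]].
  split; rewrite mstar_cmx mmul_cmx mid_cmx; congr cmx; first exact/unitarymxP.
  exact/mulmx1C/unitarymxP.
by rewrite /= !pad_cmx mstar_cmx !mmul_cmx eXY.
Qed.

Lemma K0_eq_sqcmx a1 b1 a2 b2 (X1 : 'M[C]_a1) (Y1 : 'M[C]_b1) (X2 : 'M[C]_a2)
    (Y2 : 'M[C]_b2) : hproj X1 -> hproj Y1 -> hproj X2 -> hproj Y2 ->
  K0_eq theta (sqcmx X1, sqcmx Y1) (sqcmx X2, sqcmx Y2) <->
  (\rank X1 + \rank Y2 = \rank X2 + \rank Y1)%N.
Proof.
move=> hX1 hY1 hX2 hY2; split.
  case=> -[k P] [hP]; have [Z -> hZ] := projector_cmx (P := P) hP.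
  rewrite /= !dsum_sqcmx proj_equiv_sqcmx; try by do !apply: hproj_block.
  by rewrite !rank_diag_block_mx => /addIn.
move=> rX; exists (sqcmx (1%:M : 'M[C]_0)); split; first exact/is_proj_sqcmx/hproj1.
rewrite /= !dsum_sqcmx proj_equiv_sqcmx; try by do ![apply: hproj_block | apply: hproj1].
by rewrite !rank_diag_block_mx rX.
Qed.

Lemma int_class_sqcmx z : exists p q : nat,
  int_class R z = (sqcmx (1%:M : 'M[C]_p), sqcmx (1%:M : 'M[C]_q)) /\ z = p%:Z - q%:Z.
Proof.
have e0 : sq_empty R = sqcmx (1%:M : 'M[C]_0).
  by rewrite /sq_empty /sqcmx [cmx _]thinmx0.
have e1 n : sq_id R n = sqcmx (1%:M : 'M[C]_n) by rewrite /sq_id /sqcmx mid_cmx.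
by case: z => n; [exists n, 0%N | exists 0%N, n.+1];
  rewrite /int_class e0 e1 ?NegzE ?subr0 ?sub0r.
Qed.

End ScalarMatrices.

Theorem corollary2p4 (R : realType) (theta : R) (htheta : 0 <= theta) :
  (forall P Q : sqmx R, is_proj theta P -> is_proj theta Q ->
     exists n : int, K0_eq theta (P, Q) (int_class R n)) /\
  (forall n m : int, K0_eq theta (int_class R n) (int_class R m) -> n = m).
Proof.
split.
  move=> [a P] [b Q] hP hQ.
  have [X -> hX] := projector_cmx (P := P) hP; have [Y -> hY] := projector_cmx (P := Q) hQ.
  exists ((\rank X)%:Z - (\rank Y)%:Z).
  have [p [q [-> epq]]] := int_class_sqcmx R ((\rank X)%:Z - (\rank Y)%:Z).
  by apply/(K0_eq_sqcmx theta hX hY (hproj1 p) (hproj1 q)); rewrite !mxrank1; lia.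
move=> n m; have [p [q [-> ->]]] := int_class_sqcmx R n.
have [p' [q' [-> ->]]] := int_class_sqcmx R m.
by move/(K0_eq_sqcmx theta (hproj1 p) (hproj1 q) (hproj1 p') (hproj1 q')); rewrite !mxrank1; lia.
Qed.
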